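(* Let $\mathbf{A}\in\mathbb{R}^{n\times d}$, $\mathbf{B}=[\mathbf{b}_1,\dots,\mathbf{b}_{d_B}]\in\mathbb{R}^{n\times d_B}$, $\mathbf{C}=[\mathbf{c}_1,\dots,\mathbf{c}_{n_C}]^{\rm T}\in\mathbb{R}^{n_C\times d}$, and let $k,r$ be integers with $1\le k\le\mathrm{rank}(\mathbf{B})$, $1\le r\le\mathrm{rank}(\mathbf{C})$. Let $S$ be an $l$-subset of $[d_B]$ with $0\le l\le k-1$ and $R$ a $t$-subset of $[n_C]$ with $0\le t\le r-1$. Then $$P_{k-l,r-t}(x;\mathbf{Q}_S\mathbf{A}\mathbf{P}_R,\mathbf{Q}_S\mathbf{B},\mathbf{C}\mathbf{P}_R)=\frac1{k-l}\sum_{i:\|\mathbf{Q}_S\mathbf{b}_i\|\ne0}\|\mathbf{Q}_S\mathbf{b}_i\|^2\,P_{k-l-1,r-t}(x;\mathbf{Q}_{S\cup\{i\}}\mathbf{A}\mathbf{P}_R,\mathbf{Q}_{S\cup\{i\}}\mathbf{B},\mathbf{C}\mathbf{P}_R)$$ and $$P_{k-l,r-t}(x;\mathbf{Q}_S\mathbf{A}\mathbf{P}_R,\mathbf{Q}_S\mathbf{B},\mathbf{C}\mathbf{P}_R)=\frac1{r-t}\sum_{i:\|\mathbf{c}_i^{\rm T}\mathbf{P}_R\|\ne0}\|\mathbf{c}_i^{\rm T}\mathbf{P}_R\|^2\,P_{k-l,r-t-1}(x;\mathbf{Q}_S\mathbf{A}\mathbf{P}_{R\cup\{i\}},\mathb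f{Q}_S\mathbf{B},\mathbf{C}\mathbf{P}_{R\cup\{i\}}).$$
   Context: Notation: $\mathbf{M}_{R,S}$, $\mathbf{M}_{:,S}$, $\mathbf{M}_{R,:}$ are submatrices; $\mathbf{M}^\dagger$ Moore–Penrose pseudoinverse with $\mathbf{M}_{R,S}^\dagger:=(\mathbf{M}_{R,S})^\dagger$; empty determinants are $1$ and $\mathbf{M}_{:,\emptyset}\mathbf{M}_{:,\emptyset}^\dagger$, $\mathbf{M}_{\emptyset,:}^\dagger\mathbf{M}_{\emptyset,:}$ are zero. $\mathbf{Q}_S=\mathbf{I}_n-\mathbf{B}_{:,S}\mathbf{B}_{:,S}^\dagger$ and $\mathbf{P}_R=\mathbf{I}_d-\mathbf{C}_{R,:}^\dagger\mathbf{C}_{R,:}$ (always formed from the original $\mathbf{B},\mathbf{C}$). For general $\mathbf{A}'\in\mathbb{R}^{n\times d}$, $\mathbf{B}'\in\mathbb{R}^{n\times d_B}$, $\mathbf{C}'\in\mathbb{R}^{n_C\times d}$: $p_{T,W}(x;\mathbf{A}',\mathbf{B}',\mathbf{C}')=\det[x\mathbf{I}_d-(\mathbf{Q}'_T\mathbf{A}'\mathbf{P}'_W)^{\rm T}(\mathbf{Q}'_T\mathbf{A}'\mathbf{P}'_W)]$ with $\mathbf{Q}'_T=\mathbf{I}_n-\mathbf{B}'_{:,T}\mathbf{B}'^\dagger_{:,T}$, $\mathbf{P}'_W=\mathbf{I}_d-\mathbf{C}'^\dagger_{W,:}\mathbf{C}'_{W,:}$, and $P_{k,r}(x;\mathbf{A}',\mathbf{B}',\mathbf{C}')=\sum_{W\subset[n_C],|W|=r}\sum_{T\subset[d_B],|T|=k}\det[\mathbf{C}'_{W,:}\mathbf{C}'^{\rm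 T}_{W,:}]\det[\mathbf{B}'^{\rm T}_{:,T}\mathbf{B}'_{:,T}]\,p_{T,W}(x;\mathbf{A}',\mathbf{B}',\mathbf{C}')$. *)

From HB Require Import structures.
From mathcomp Require Import all_boot all_order all_algebra.
From mathcomp Require Import boolp classical_sets reals.
Set Implicit Arguments. Unset Strict Implicit. Unset Printing Implicit Defensive.
Import Order.TTheory GRing.Theory Num.Theory.
Local Open Scope ring_scope.

Section Defs.
Variable R : realType.

(* Moore-Penrose pseudoinverse: the (unique, always existing) matrix X satisfying
   the four Penrose equations. *)
Definition penrose {m n} (M : 'M[R]_(m, n)) (X : 'M[R]_(n, m)) : Prop :=
  [/\ M *m X *m M = M, X *m M *m X = X, (M *m X)^T = M *m X & (X *m M)^T = X *m M].

Definition pinv {m n} (M : 'M[R]_(m, n)) : 'M[R]_(n, m) := xget 0 (penrose M).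

(* B_{:,T}: the columns of B indexed by T (in increasing order). *)
Definition colsS {n dB} (B : 'M[R]_(n, dB)) (T : {set 'I_dB}) : 'M[R]_(n, #|T|) :=
  colsub (fun j : 'I_#|T| => enum_val j) B.

(* C_{W,:}: the rows of C indexed by W (in increasing order). *)
Definition rowsS {nC d} (C : 'M[R]_(nC, d)) (W : {set 'I_nC}) : 'M[R]_(#|W|, d) :=
  rowsub (fun j : 'I_#|W| => enum_val j) C.

Definition Qproj {n dB} (B : 'M[R]_(n, dB)) (T : {set 'I_dB}) : 'M[R]_n :=
  1%:M - colsS B T *m pinv (colsS B T).

Definition Pproj {nC d} (C : 'M[R]_(nC, d)) (W : {set 'I_nC}) : 'M[R]_d :=
  1%:M - pinv (rowsS C W) *m rowsS C W.

Definition pTW {n d dB nC} (A : 'M[R]_(n, d)) (B : 'M[R]_(n, dB)) (C : 'M[R]_(nC, d))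
  (T : {set 'I_dB}) (W : {set 'I_nC}) : {poly R} :=
  let M := Qproj B T *m A *m Pproj C W in char_poly (M^T *m M).

Definition Pkr {n d dB nC} (k r : nat) (A : 'M[R]_(n, d)) (B : 'M[R]_(n, dB))
  (C : 'M[R]_(nC, d)) : {poly R} :=
  \sum_(W : {set 'I_nC} | #|W| == r) \sum_(T : {set 'I_dB} | #|T| == k)
     (\det (rowsS C W *m (rowsS C W)^T) * \det ((colsS B T)^T *m colsS B T))
       *: pTW A B C T W.

Definition vnorm {p q} (v : 'M[R]_(p, q)) : R :=
  Num.sqrt (\sum_i \sum_j v i j ^+ 2).

End Defs.

From HB Require Import structures.
From mathcomp Require Import all_boot all_order all_algebra.
From mathcomp Require Import boolp classical_sets reals.
From mathcomp Require Import fingroup perm.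
Import Order.TTheory GRing.Theory Num.Theory.
Local Open Scope ring_scope.
Set Implicit Arguments. Unset Strict Implicit. Unset Printing Implicit Defensive.

(* Since Q_T(Q_S B) Q_S = Q_{S u T} and P_R P_W(C P_R) = P_{R u W}, every term
   p_{T,W} on the left-hand side is p_{S u T, R u W}(x; A, B, C), so P_{k-l,r-t}
   is a sum over T of Gram determinants of the columns of Q_S B weighting a
   function of S u T.  For v = Q_S b_i nonzero, Q_{S u {i}} = (I - v v^T/|v|^2) Q_S,
   and eliminating the column v gives
     det Gram((Q_S B)_{:,{i} u T}) = |v|^2 det Gram((Q_{S u {i}} B)_{:,T}).
   Summing over i in T counts each T of size k-l exactly k-l times, while the
   columns with Q_S b_i = 0 contribute only vanishing Gram determinants.  The
   second identity is the same argument for C^T, because P_R^T = Q_R(C^T). *)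

Section Pseudoinverse.
Variable R : realType.
Implicit Types m p q : nat.

Lemma mulmx_trmx_eq0 m p (M : 'M[R]_(m, p)) : M *m M^T = 0 -> M = 0.
Proof.
move=> /matrixP MMt0; apply/matrixP => i j; rewrite mxE.
have /eqP := MMt0 i i; rewrite !mxE psumr_eq0 => [/allP/(_ j (mem_index_enum _))|k _].
  by rewrite mxE -expr2 sqrf_eq0 => /eqP.
by rewrite mxE -expr2 sqr_ge0.
Qed.

Lemma row_free_gram_unitmx m p (G : 'M[R]_(m, p)) : row_free G -> G *m G^T \in unitmx.
Proof.
move=> freeG; rewrite unitmxE unitfE; apply/det0P => -[v /eqP v_neq0].
rewrite mulmxA => vGGt0.
have /mulmx_trmx_eq0 vG0 : v *m G *m (v *m G)^T = 0.
  by rewrite trmx_mul mulmxA vGGt0 mul0mx.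
by apply: v_neq0; apply: (row_free_inj freeG); rewrite vG0 mul0mx.
Qed.

Lemma penrose_full_rank_factor m p q (F : 'M[R]_(m, q)) (G : 'M[R]_(q, p)) :
  row_free F^T -> row_free G ->
  penrose (F *m G) (G^T *m invmx (G *m G^T) *m invmx (F^T *m F) *m F^T).
Proof.
move=> freeF freeG.
have uG := row_free_gram_unitmx freeG.
have := row_free_gram_unitmx freeF; rewrite trmxK => uF.
set Gi := invmx (G *m G^T); set Fi := invmx (F^T *m F).
have GGi : G *m G^T *m Gi = 1%:M by apply: mulmxV.
have FiF : Fi *m (F^T *m F) = 1%:M by apply: mulVmx.
have MX : F *m G *m (G^T *m Gi *m Fi *m F^T) = F *m Fi *m F^T.
  by rewrite !mulmxA -(mulmxA F G) -(mulmxA F (G *m G^T)) GGi mulmx1.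
have XM : G^T *m Gi *m Fi *m F^T *m (F *m G) = G^T *m Gi *m G.
  by rewrite -!mulmxA (mulmxA F^T) (mulmxA Fi) FiF mul1mx.
split.
- by rewrite MX -!mulmxA (mulmxA F^T) (mulmxA Fi) FiF mul1mx.
- by rewrite XM -!mulmxA (mulmxA G) (mulmxA Gi (G *m G^T)) (mulVmx uG) mul1mx.
- by rewrite MX !trmx_mul trmxK trmx_inv trmx_mul trmxK !mulmxA.
- by rewrite XM !trmx_mul trmxK trmx_inv trmx_mul trmxK !mulmxA.
Qed.

Lemma penrose_exists m p (M : 'M[R]_(m, p)) : exists X, penrose M X.
Proof.
rewrite -{1}(mulmx_base M); eexists; apply: penrose_full_rank_factor.
  by rewrite /row_free mxrank_tr; apply: col_base_full.
exact: row_base_free.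
Qed.

Lemma pinvP m p (M : 'M[R]_(m, p)) : penrose M (pinv M).
Proof. by apply: xgetPex; apply: penrose_exists. Qed.

Lemma penrose_tr m p (M : 'M[R]_(m, p)) X : penrose M X -> penrose M^T X^T.
Proof.
by case=> MXM XMX MXs XMs; split; rewrite -?trmx_mul ?mulmxA ?MXM ?XMX ?trmxK.
Qed.

End Pseudoinverse.

Section ColumnProjector.
Variable R : realType.
Implicit Types m p q : nat.

Definition col_sub m p q (N : 'M[R]_(m, q)) (M : 'M[R]_(m, p)) := (N^T <= M^T)%MS.

Lemma col_subP m p q (N : 'M[R]_(m, q)) (M : 'M[R]_(m, p)) :
  col_sub N M <-> exists Y, N = M *m Y.
Proof.
split=> [/submxP [D eN]|[Y ->]]; last by rewrite /col_sub trmx_mul submxMl.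
by exists D^T; rewrite -[N]trmxK eN trmx_mul trmxK.
Qed.

Lemma col_sub_trans m p1 p2 p3 (M1 : 'M[R]_(m, p1)) (M2 : 'M[R]_(m, p2))
  (M3 : 'M[R]_(m, p3)) : col_sub M1 M2 -> col_sub M2 M3 -> col_sub M1 M3.
Proof. exact: submx_trans. Qed.

Lemma col_subD m p q (N1 N2 : 'M[R]_(m, q)) (M : 'M[R]_(m, p)) :
  col_sub N1 M -> col_sub N2 M -> col_sub (N1 + N2) M.
Proof. by rewrite /col_sub linearD; apply: addmx_sub. Qed.

Lemma col_sub_row_mx m p q1 q2 (N1 : 'M[R]_(m, q1)) (N2 : 'M[R]_(m, q2)) (M : 'M[R]_(m, p)) :
  col_sub (row_mx N1 N2) M = col_sub N1 M && col_sub N2 M.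
Proof. by rewrite /col_sub tr_row_mx col_mx_sub. Qed.

Lemma col_sub_fixed m p q (N : 'M[R]_(m, q)) (M : 'M[R]_(m, p)) (P : 'M[R]_m) :
  col_sub N M -> P *m M = M -> P *m N = N.
Proof. by move/col_subP => [Y ->] PM; rewrite mulmxA PM. Qed.

Definition colproj m p (M : 'M[R]_(m, p)) : 'M[R]_m := M *m pinv M.

Lemma colproj_sym m p (M : 'M[R]_(m, p)) : (colproj M)^T = colproj M.
Proof. by case: (pinvP M). Qed.

Lemma colproj_fixed m p (M : 'M[R]_(m, p)) : colproj M *m M = M.
Proof. by case: (pinvP M). Qed.

Lemma colproj_sub m p (M : 'M[R]_(m, p)) : col_sub (colproj M) M.
Proof. by apply/col_subP; exists (pinv M). Qed.

Lemma colproj_idem m p (M : 'M[R]_(m, p)) : colproj M *m colproj M = colproj M.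
Proof. by rewrite {1}/colproj mulmxA colproj_fixed. Qed.

Lemma colproj_unique m p (M : 'M[R]_(m, p)) (P : 'M[R]_m) :
  P^T = P -> P *m M = M -> col_sub P M -> colproj M = P.
Proof.
move=> symP PM /col_subP [Y eP].
have PiP : colproj M *m P = P by rewrite eP mulmxA colproj_fixed.
have PPi : P *m colproj M = colproj M by rewrite /colproj mulmxA PM.
by rewrite -colproj_sym -PPi trmx_mul symP colproj_sym PiP.
Qed.

Lemma colproj_eq m p q (M : 'M[R]_(m, p)) (N : 'M[R]_(m, q)) :
  col_sub M N -> col_sub N M -> colproj M = colproj N.
Proof.
move=> MN NM; apply: colproj_unique; first exact: colproj_sym.
  exact: col_sub_fixed MN (colproj_fixed N).
exact: col_sub_trans (colproj_sub N) NM.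
Qed.

Lemma colproj_penrose m p (M : 'M[R]_(m, p)) X : penrose M X -> colproj M = M *m X.
Proof. by case=> MXM _ MXs _; apply: colproj_unique => //; apply/col_subP; exists X. Qed.

Lemma colproj_perp m p q (M : 'M[R]_(m, p)) (N : 'M[R]_(m, q)) :
  colproj M *m N = 0 -> colproj N *m colproj M = 0.
Proof.
move=> PMN; apply: trmx_inj; rewrite trmx_mul !colproj_sym trmx0.
by have /col_subP [Y ->] := colproj_sub N; rewrite mulmxA PMN mul0mx.
Qed.

Lemma colproj_row_mx m p q (M : 'M[R]_(m, p)) (N : 'M[R]_(m, q)) :
  colproj (row_mx M N) = colproj M + colproj ((1%:M - colproj M) *m N).
Proof.
set P1 := colproj M; set N' := (1%:M - P1) *m N; set P2 := colproj N'.
have P1N' : P1 *m N' = 0 by rewrite /N' mulmxA mulmxBr mulmx1 colproj_idem subrr mul0mx.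
have P2P1 : P2 *m P1 = 0 by apply: colproj_perp.
have P2M : P2 *m M = 0.
  by rewrite -[M](colproj_fixed M) -/P1 mulmxA P2P1 mul0mx.
have P2N : P2 *m N = N - P1 *m N.
  move: (colproj_fixed N'); rewrite -/P2 /N' mulmxBl mul1mx mulmxBr mulmxA.
  by rewrite P2P1 mul0mx subr0.
apply: colproj_unique.
- by rewrite linearD /= !colproj_sym.
- by rewrite mul_mx_row mulmxDl mulmxDl colproj_fixed P2M addr0 P2N addrC subrK.
- apply: col_subD; apply: col_sub_trans (colproj_sub _) _; apply/col_subP.
    by exists (col_mx 1%:M 0); rewrite mul_row_col mulmx1 mulmx0 addr0.
  exists (col_mx (- pinv M *m N) 1%:M).
  by rewrite mul_row_col mulmx1 /N' mulmxBl mul1mx mulNmx mulmxN mulmxA addrC.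
Qed.

End ColumnProjector.

Section ColumnSubsets.
Variable R : realType.

Lemma QprojE n dB (M : 'M[R]_(n, dB)) T : Qproj M T = 1%:M - colproj (colsS M T).
Proof. by []. Qed.

Variables (n dB : nat) (B : 'M[R]_(n, dB)).
Implicit Types (S T U : {set 'I_dB}) (x : 'I_dB).

Lemma colsS_mulmx p (X : 'M[R]_(p, n)) T : colsS (X *m B) T = X *m colsS B T.
Proof. by apply/matrixP => i j; rewrite !mxE; apply: eq_bigr => k _; rewrite !mxE. Qed.

Lemma col_colsS T x (xT : x \in T) : col (enum_rank_in xT x) (colsS B T) = col x B.
Proof. by apply/matrixP => i j; rewrite !mxE enum_rankK_in. Qed.

Lemma col_sub_col_colsS T x : x \in T -> col_sub (col x B) (colsS B T).
Proof.
move=> xT; apply/col_subP; exists (delta_mx (enum_rank_in xT x) 0).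
by rewrite -colE col_colsS.
Qed.

Lemma colsS_sub p (M : 'M[R]_(n, p)) U :
  (forall x, x \in U -> col_sub (col x B) M) -> col_sub (colsS B U) M.
Proof.
move=> sub_colB; apply/row_subP => j.
have -> : row j (colsS B U)^T = (col (enum_val j) B)^T by apply/matrixP => a b; rewrite !mxE.
exact/sub_colB/enum_valP.
Qed.

Lemma colsS_subset T U : T \subset U -> col_sub (colsS B T) (colsS B U).
Proof.
by move/fintype.subsetP => sTU; apply: colsS_sub => x /sTU; apply: col_sub_col_colsS.
Qed.

Lemma colproj_colsS_setU S T :
  colproj (colsS B (S :|: T)) = colproj (row_mx (colsS B S) (colsS B T)).
Proof.
apply: colproj_eq.
  apply: colsS_sub => x; rewrite inE => /orP[xS|xT].
    by apply: col_sub_trans (col_sub_col_colsS xS) _; apply/col_subP;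
       exists (col_mx 1%:M 0); rewrite mul_row_col mulmx1 mulmx0 addr0.
  by apply: col_sub_trans (col_sub_col_colsS xT) _; apply/col_subP;
     exists (col_mx 0 1%:M); rewrite mul_row_col mulmx1 mulmx0 add0r.
by rewrite col_sub_row_mx !colsS_subset ?finset.subsetUl ?finset.subsetUr.
Qed.

Lemma Qproj_setU S T : Qproj (Qproj B S *m B) T *m Qproj B S = Qproj B (S :|: T).
Proof.
rewrite [Qproj (_ *m B) T]QprojE colsS_mulmx !QprojE colproj_colsS_setU colproj_row_mx.
set P1 := colproj (colsS B S); set P2 := colproj _.
have P2P1 : P2 *m P1 = 0.
  by apply: colproj_perp; rewrite mulmxA mulmxBr mulmx1 colproj_idem subrr mul0mx.
by rewrite mulmxBl mul1mx mulmxBr mulmx1 P2P1 subr0 opprD addrA.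
Qed.

Lemma Qproj_col0 S x : x \in S -> col x (Qproj B S *m B) = 0.
Proof.
move=> xS; rewrite colE -mulmxA -colE QprojE mulmxBl mul1mx.
by rewrite (col_sub_fixed (col_sub_col_colsS xS) (colproj_fixed _)) subrr.
Qed.

End ColumnSubsets.

Section Gram.
Variable R : fieldType.
Implicit Types m p q : nat.

Definition gram m p (M : 'M[R]_(m, p)) := \det (M^T *m M).

Lemma gram_mulmx m p (M : 'M[R]_(m, p)) (E : 'M[R]_p) : gram (M *m E) = \det E ^+ 2 * gram M.
Proof.
rewrite /gram trmx_mul mulmxA -(mulmxA _ M^T) !det_mulmx det_tr.
by rewrite mulrC mulrA -expr2.
Qed.

Lemma gram_colsub_codom m p p1 p2 (M : 'M[R]_(m, p)) (f : 'I_p1 -> 'I_p) (g : 'I_p2 -> 'I_p) :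
  injective f -> injective g -> codom f =i codom g ->
  gram (colsub f M) = gram (colsub g M).
Proof.
move=> injf injg codom_fg.
have e12 : p1 = p2.
  rewrite -[p1]card_ord -[p2]card_ord -(card_codom injf) -(card_codom injg).
  exact: eq_card.
subst p2.
have gf j : g j \in codom f by rewrite codom_fg codom_f.
pose s j := iinv (gf j).
have fs j : f (s j) = g j by apply: f_iinv.
have injs : injective s by move=> j1 j2 ej; apply: injg; rewrite -!fs ej.
have -> : colsub g M = colsub f M *m perm_mx (perm injs)^-1.
  by rewrite -col_permE; apply/matrixP => i j; rewrite !mxE permE fs.
by rewrite gram_mulmx det_perm sqrr_sign mul1r.
Qed.

Lemma gram_col0 m p (M : 'M[R]_(m, p)) j : col j M = 0 -> gram M = 0.
Proof.
move=> Mj0; apply/eqP/det0P; exists (delta_mx 0 j).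
  by apply/eqP => /matrixP /(_ 0 j); rewrite !mxE !eqxx => /eqP; rewrite oner_eq0.
by rewrite mulmxA -[delta_mx 0 j]trmxK -trmx_mul trmx_delta -colE Mj0 trmx0 mul0mx.
Qed.

(* Right multiplication by the unimodular [1 -c; 0 1] makes the first column
   orthogonal to the others. *)
Lemma gram_row_mx_col m q (v : 'cV[R]_m) (U : 'M[R]_(m, q)) :
  let s := (v^T *m v) 0 0 in s != 0 ->
  gram (row_mx v U) = s * gram (U - v *m (s^-1 *: (v^T *m U))).
Proof.
move=> s s_neq0; set c := s^-1 *: (v^T *m U); set U' := U - v *m c.
have vtv : v^T *m v = s%:M by rewrite [LHS]mx11_scalar.
have vU' : v^T *m U' = 0.
  by rewrite mulmxBr mulmxA vtv mul_scalar_mx scalerA mulfV // scale1r subrr.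
have U'v : U'^T *m v = 0 by rewrite -[v]trmxK -trmx_mul vU' trmx0.
pose E : 'M[R]_(1 + q) := block_mx 1%:M (- c) 0 1%:M.
have -> : row_mx v U = row_mx v U' *m invmx E.
  rewrite -[row_mx v U](mulmxK (_ : E \in unitmx)); last first.
    by rewrite unitmxE det_ublock !det1 mulr1 unitr1.
  by rewrite mul_row_block !mulmx1 !mulmx0 addr0 mulmxN addrC.
rewrite gram_mulmx det_inv det_ublock !det1 mulr1 invr1 expr1n mul1r.
by rewrite /gram tr_row_mx mul_col_row vU' U'v det_ublock vtv det_scalar1.
Qed.

End Gram.

Section GramColsS.
Variable R : realType.

Lemma gram_colsS_setU1 m p (M : 'M[R]_(m, p)) (T : {set 'I_p}) i : i \notin T ->
  gram (colsS M (i |: T)) = gram (row_mx (col i M) (colsS M T)).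
Proof.
move=> iT.
pose f (j : 'I_(1 + #|T|)) := if split j is inr j' then enum_val j' else i.
have injf : injective f.
  rewrite /f => j1 j2; case: splitP => [a ea|a ea]; case: splitP => [b eb|b eb].
  - by move=> _; apply: val_inj; rewrite /= ea eb (ord1 a) (ord1 b).
  - by move=> ei; move: iT; rewrite ei enum_valP.
  - by move=> ei; move: iT; rewrite -ei enum_valP.
  - by move=> /enum_val_inj eab; apply: val_inj; rewrite /= ea eb eab.
have -> : row_mx (col i M) (colsS M T) = colsub f M.
  by apply/matrixP => a b; rewrite !mxE /f; case: (split b) => j; rewrite !mxE.
apply: gram_colsub_codom => // [|x]; first exact: enum_val_inj.
apply/codomP/codomP => -[j ->].
  have /setU1P [->|xT] := enum_valP j.
    by exists (unsplit (inl ord0)); rewrite /f unsplitK.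
  by exists (unsplit (inr (enum_rank_in xT (enum_val j)))); rewrite /f unsplitK enum_rankK_in.
rewrite /f; case: (split j) => [_|j'].
  by exists (enum_rank_in (setU11 i T) i); rewrite enum_rankK_in ?setU11.
have iT' : enum_val j' \in i |: T by rewrite setU1r ?enum_valP.
by exists (enum_rank_in iT' (enum_val j')); rewrite enum_rankK_in.
Qed.

Lemma gram_colsS_col0 m p (M : 'M[R]_(m, p)) (T : {set 'I_p}) x :
  x \in T -> col x M = 0 -> gram (colsS M T) = 0.
Proof. by move=> xT Mx0; apply: (gram_col0 (j := enum_rank_in xT x)); rewrite col_colsS. Qed.

End GramColsS.

Section RankOneUpdate.
Variable R : realType.

Lemma vnorm_sqr m (v : 'cV[R]_m) : vnorm v ^+ 2 = (v^T *m v) 0 0.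
Proof.
rewrite /vnorm sqr_sqrtr; last by do 2!apply: sumr_ge0 => ? _; apply: sqr_ge0.
by rewrite mxE; apply: eq_bigr => k _; rewrite big_ord1 !mxE expr2.
Qed.

Lemma vnorm_eq0 m (v : 'cV[R]_m) : (vnorm v == 0) = (v == 0).
Proof.
rewrite -sqrf_eq0 vnorm_sqr; apply/eqP/eqP => [vtv0|->]; last by rewrite mulmx0 mxE.
apply: trmx_inj; rewrite trmx0; apply: mulmx_trmx_eq0.
by rewrite trmxK [LHS]mx11_scalar vtv0 raddf0.
Qed.

Lemma vnorm_tr p q (M : 'M[R]_(p, q)) : vnorm M^T = vnorm M.
Proof. by rewrite /vnorm exchange_big; congr Num.sqrt; do 2!apply: eq_bigr => ? _; rewrite mxE. Qed.

Lemma colproj_col m (v : 'cV[R]_m) : v != 0 ->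
  colproj v = (vnorm v ^+ 2)^-1 *: (v *m v^T).
Proof.
rewrite -vnorm_eq0 -sqrf_eq0 vnorm_sqr => s_neq0.
set s := (v^T *m v) 0 0 in s_neq0 *.
have vtv : v^T *m v = s%:M by rewrite [LHS]mx11_scalar.
apply: colproj_unique.
- by rewrite linearZ /= trmx_mul trmxK.
- by rewrite -scalemxAl -mulmxA vtv mul_mx_scalar scalerA mulVf // scale1r.
- by apply/col_subP; exists (s^-1 *: v^T); rewrite scalemxAr.
Qed.

Variables (n dB : nat) (B : 'M[R]_(n, dB)).
Implicit Types (S T : {set 'I_dB}) (i : 'I_dB).

Lemma Qproj_setU1 S i : let v := col i (Qproj B S *m B) in v != 0 ->
  Qproj B (S :|: [set i]) = (1%:M - (vnorm v ^+ 2)^-1 *: (v *m v^T)) *m Qproj B S.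
Proof.
move=> v v_neq0; rewrite -Qproj_setU QprojE -colproj_col //; congr ((_ - _) *m _).
apply: colproj_eq; first by apply: colsS_sub => x /set1P ->; apply: submx_refl.
by apply: col_sub_col_colsS; rewrite set11.
Qed.

Lemma gram_Qproj_setU1 S T i : i \notin T -> col i (Qproj B S *m B) != 0 ->
  vnorm (col i (Qproj B S *m B)) ^+ 2 * gram (colsS (Qproj B (S :|: [set i]) *m B) T)
  = gram (colsS (Qproj B S *m B) (i |: T)).
Proof.
move=> iT v_neq0; have s_neq0 := v_neq0; rewrite -vnorm_eq0 -sqrf_eq0 vnorm_sqr in s_neq0.
rewrite gram_colsS_setU1 // gram_row_mx_col // (Qproj_setU1 v_neq0) !vnorm_sqr.
rewrite -mulmxA colsS_mulmx; set v := col i _; set U := colsS _ T.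
by rewrite mulmxBl mul1mx -scalemxAl -mulmxA scalemxAr.
Qed.

End RankOneUpdate.

Section DoubleCounting.
Variables (R : numFieldType) (V : lmodType R) (I : finType).
Implicit Types (T : {set I}) (g : {set I} -> V).

(* Each m-set T is counted once for each of its m elements. *)
Lemma sum_card_double_count m (P : pred I) g : (0 < m)%N ->
  (forall T i, i \in T -> ~~ P i -> g T = 0) ->
  \sum_(T : {set I} | #|T| == m) g T
  = m%:R^-1 *: \sum_(i | P i) \sum_(T : {set I} | (#|T| == m) && (i \in T)) g T.
Proof.
move=> m_gt0 g0; rewrite (exchange_big_dep (fun T : {set I} => #|T| == m)) /=; last first.
  by move=> i T _ /andP[].
rewrite scaler_sumr; apply: eq_bigr => T /eqP cardT; rewrite sumr_const.
have [gT0|gT_neq0] := eqVneq (g T) 0; first by rewrite gT0 mul0rn scaler0.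
have -> : #|(fun i => [&& P i, #|T| == m & i \in T])| = m.
  rewrite -[in RHS]cardT; apply: eq_card => i; rewrite unfold_in /= cardT eqxx /=.
  case iT: (i \in T); rewrite ?andbF // andbT.
  by apply: contraNT gT_neq0 => /(g0 _ _ iT)/eqP.
by rewrite -scaler_nat scalerA mulVf ?scale1r // pnatr_eq0 -lt0n.
Qed.

Lemma sum_card_setU1 m i g : (0 < m)%N ->
  \sum_(T : {set I} | (#|T| == m) && (i \in T)) g T
  = \sum_(T : {set I} | (#|T| == m.-1) && (i \notin T)) g (i |: T).
Proof.
move=> m_gt0; rewrite (reindex_onto (fun T : {set I} => i |: T) (fun T => T :\ i)) /=; last first.
  by move=> T /andP[_ iT]; rewrite finset.setD1K.
apply: eq_bigl => T; rewrite setU11 andbT cardsU1.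
case iT: (i \in T) => /=.
  rewrite andbF; apply/negbTE; apply/negP => /andP[_ /eqP eT].
  by move: (finset.setD11 i (i |: T)); rewrite eT iT.
rewrite setU1K ?iT // eqxx !andbT add1n.
by case: m m_gt0 => // m _; rewrite eqSS.
Qed.

End DoubleCounting.

Section GramExpansion.
Variables (R : realType) (V : lmodType R) (n dB : nat) (B : 'M[R]_(n, dB)).

Lemma sum_gram_Qproj m S (F : {set 'I_dB} -> V) : (0 < m)%N ->
  \sum_(T : {set 'I_dB} | #|T| == m) gram (colsS (Qproj B S *m B) T) *: F (S :|: T)
  = m%:R^-1 *: \sum_(i | vnorm (col i (Qproj B S *m B)) != 0)
      vnorm (col i (Qproj B S *m B)) ^+ 2 *:
      \sum_(T : {set 'I_dB} | #|T| == m.-1)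
         gram (colsS (Qproj B (S :|: [set i]) *m B) T) *: F ((S :|: [set i]) :|: T).
Proof.
pose P i := vnorm (col i (Qproj B S *m B)) != 0.
move=> m_gt0; rewrite (sum_card_double_count (P := P) m_gt0); last first.
  move=> T i iT; rewrite /P negbK (vnorm_eq0 (col i (Qproj B S *m B))).
  by move=> /eqP /(gram_colsS_col0 iT) ->; rewrite scale0r.
apply: congr1; apply: eq_bigr => i; rewrite /P (vnorm_eq0 (col i _)) => v_neq0.
rewrite sum_card_setU1 // [in RHS](bigID (fun T : {set 'I_dB} => i \in T)) /=.
rewrite [X in _ *: (X + _)]big1 ?add0r; last first.
  move=> T /andP[_ iT]; rewrite (gram_colsS_col0 iT) ?scale0r //.
  by apply: Qproj_col0; rewrite !inE eqxx orbT.
rewrite scaler_sumr; apply: eq_bigr => T /andP[_ iT].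
by rewrite scalerA gram_Qproj_setU1 // -finset.setUA.
Qed.

End GramExpansion.

Section Transposition.
Variable R : realType.

Lemma rowsS_tr nC d (C : 'M[R]_(nC, d)) W : rowsS C W = (colsS C^T W)^T.
Proof. by apply/matrixP => a b; rewrite !mxE. Qed.

Lemma Pproj_tr nC d (C : 'M[R]_(nC, d)) W : (Pproj C W)^T = Qproj C^T W.
Proof.
rewrite QprojE; have -> : colsS C^T W = (rowsS C W)^T by rewrite rowsS_tr trmxK.
rewrite (colproj_penrose (penrose_tr (pinvP _))).
by rewrite /Pproj linearB /= trmx1 trmx_mul.
Qed.

Lemma trmx_mul_Pproj nC d (C : 'M[R]_(nC, d)) Rs : (C *m Pproj C Rs)^T = Qproj C^T Rs *m C^T.
Proof. by rewrite trmx_mul Pproj_tr. Qed.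

Lemma Pproj_setU nC d (C : 'M[R]_(nC, d)) Rs W :
  Pproj C Rs *m Pproj (C *m Pproj C Rs) W = Pproj C (Rs :|: W).
Proof. by apply: trmx_inj; rewrite trmx_mul !Pproj_tr trmx_mul_Pproj Qproj_setU. Qed.

Lemma vnorm_row_mul_Pproj nC d (C : 'M[R]_(nC, d)) Rs i :
  vnorm (row i (C *m Pproj C Rs)) = vnorm (col i (Qproj C^T Rs *m C^T)).
Proof. by rewrite -trmx_mul_Pproj -vnorm_tr tr_row. Qed.

Lemma det_rowsS_mul_Pproj nC d (C : 'M[R]_(nC, d)) Rs W :
  \det (rowsS (C *m Pproj C Rs) W *m (rowsS (C *m Pproj C Rs) W)^T)
  = gram (colsS (Qproj C^T Rs *m C^T) W).
Proof. by rewrite rowsS_tr trmx_mul_Pproj trmxK. Qed.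

End Transposition.

Section ScaleExchange.
Variables (R : comPzRingType) (V : lmodType R) (I J : finType).

Lemma exchange_big_scale (P : pred I) (Q : pred J) (a : I -> R) (b : J -> R)
  (F : I -> J -> V) :
  \sum_(i | P i) a i *: \sum_(j | Q j) b j *: F i j
  = \sum_(j | Q j) b j *: \sum_(i | P i) a i *: F i j.
Proof.
under eq_bigr do rewrite scaler_sumr.
rewrite exchange_big; apply: eq_bigr => j _; rewrite scaler_sumr.
by apply: eq_bigr => i _; rewrite !scalerA mulrC.
Qed.

End ScaleExchange.

Section Recurrences.
Variables (R : realType) (n d dB nC : nat).
Variables (A : 'M[R]_(n, d)) (B : 'M[R]_(n, dB)) (C : 'M[R]_(nC, d)).
Implicit Types (S T : {set 'I_dB}) (Rs W : {set 'I_nC}).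

Lemma pTW_Qproj_Pproj S Rs T W :
  pTW (Qproj B S *m A *m Pproj C Rs) (Qproj B S *m B) (C *m Pproj C Rs) T W
  = pTW A B C (S :|: T) (Rs :|: W).
Proof. by rewrite /pTW -Qproj_setU -Pproj_setU !mulmxA. Qed.

Lemma Pkr_Qproj_Pproj k q S Rs :
  Pkr k q (Qproj B S *m A *m Pproj C Rs) (Qproj B S *m B) (C *m Pproj C Rs)
  = \sum_(W : {set 'I_nC} | #|W| == q) gram (colsS (Qproj C^T Rs *m C^T) W) *:
      \sum_(T : {set 'I_dB} | #|T| == k) gram (colsS (Qproj B S *m B) T) *:
        pTW A B C (S :|: T) (Rs :|: W).
Proof.
apply: eq_bigr => W _; rewrite det_rowsS_mul_Pproj scaler_sumr.
by apply: eq_bigr => T _; rewrite pTW_Qproj_Pproj scalerA.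
Qed.

Lemma Pkr_Qproj_rec m q S Rs : (0 < m)%N ->
  Pkr m q (Qproj B S *m A *m Pproj C Rs) (Qproj B S *m B) (C *m Pproj C Rs)
  = m%:R^-1 *: \sum_(i | vnorm (col i (Qproj B S *m B)) != 0)
      vnorm (col i (Qproj B S *m B)) ^+ 2 *:
        Pkr m.-1 q (Qproj B (S :|: [set i]) *m A *m Pproj C Rs)
          (Qproj B (S :|: [set i]) *m B) (C *m Pproj C Rs).
Proof.
move=> m_gt0; rewrite Pkr_Qproj_Pproj exchange_big_scale.
rewrite (sum_gram_Qproj _ _ (fun U => \sum_(W : {set 'I_nC} | #|W| == q)
  gram (colsS (Qproj C^T Rs *m C^T) W) *: pTW A B C U (Rs :|: W))) //.
by apply: congr1; apply: eq_bigr => i _; rewrite Pkr_Qproj_Pproj exchange_big_scale.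
Qed.

Lemma Pkr_Pproj_rec m q S Rs : (0 < q)%N ->
  Pkr m q (Qproj B S *m A *m Pproj C Rs) (Qproj B S *m B) (C *m Pproj C Rs)
  = q%:R^-1 *: \sum_(i | vnorm (row i (C *m Pproj C Rs)) != 0)
      vnorm (row i (C *m Pproj C Rs)) ^+ 2 *:
        Pkr m q.-1 (Qproj B S *m A *m Pproj C (Rs :|: [set i]))
          (Qproj B S *m B) (C *m Pproj C (Rs :|: [set i])).
Proof.
move=> q_gt0; rewrite Pkr_Qproj_Pproj.
rewrite (sum_gram_Qproj _ _ (fun V => \sum_(T : {set 'I_dB} | #|T| == m)
  gram (colsS (Qproj B S *m B) T) *: pTW A B C (S :|: T) V)) //.
apply: congr1; apply: eq_big => i; first by rewrite vnorm_row_mul_Pproj.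
by move=> _; rewrite vnorm_row_mul_Pproj Pkr_Qproj_Pproj.
Qed.

End Recurrences.

Theorem proposition3p6 (R : realType) (n d dB nC : nat)
  (A : 'M[R]_(n, d)) (B : 'M[R]_(n, dB)) (C : 'M[R]_(nC, d))
  (k r l t : nat) (S : {set 'I_dB}) (Rs : {set 'I_nC}) :
  (1 <= k)%N -> (k <= \rank B)%N -> (1 <= r)%N -> (r <= \rank C)%N ->
  #|S| = l -> (l <= k - 1)%N -> #|Rs| = t -> (t <= r - 1)%N ->
  Pkr (k - l) (r - t) (Qproj B S *m A *m Pproj C Rs) (Qproj B S *m B) (C *m Pproj C Rs)
  = ((k - l)%:R)^-1 *:
      \sum_(i : 'I_dB | vnorm (col i (Qproj B S *m B)) != 0)
        (vnorm (col i (Qproj B S *m B)) ^+ 2) *: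
          Pkr (k - l - 1) (r - t)
            (Qproj B (S :|: [set i]) *m A *m Pproj C Rs)
            (Qproj B (S :|: [set i]) *m B) (C *m Pproj C Rs)
  /\
  Pkr (k - l) (r - t) (Qproj B S *m A *m Pproj C Rs) (Qproj B S *m B) (C *m Pproj C Rs)
  = ((r - t)%:R)^-1 *:
      \sum_(i : 'I_nC | vnorm (row i (C *m Pproj C Rs)) != 0)
        (vnorm (row i (C *m Pproj C Rs)) ^+ 2) *:
          Pkr (k - l) (r - t - 1)
            (Qproj B S *m A *m Pproj C (Rs :|: [set i]))
            (Qproj B S *m B) (C *m Pproj C (Rs :|: [set i])).
Proof.
move=> k_gt0 _ r_gt0 _ _ lk _ tr.
rewrite !subn1; split; [apply: Pkr_Qproj_rec | apply: Pkr_Pproj_rec].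
  by rewrite subn_gt0 (leq_ltn_trans lk) // subn1 ltn_predL.
by rewrite subn_gt0 (leq_ltn_trans tr) // subn1 ltn_predL.
Qed.
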